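(* Let $q$ be a prime power, $\eta\ge0$ an integer, $(\delta_T,\delta_X)\in\mathbb{Z}\times\mathbb{N}$ with $\delta=\delta_T+\eta\delta_X\ge0$. For every monomial $M$ of bidegree $(\delta_T,\delta_X)$, the leading monomial of $\pi_{(\delta_T,\delta_X)}(M)$ with respect to the monomial order $<$ is $\le M$.
   Context: $R=\mathbb{F}_q[T_1,T_2,X_1,X_2]$; the bidegree of $T_1^{c_1}T_2^{c_2}X_1^{d_1}X_2^{d_2}$ is $(c_1+c_2-\eta d_1,d_1+d_2)$; $R(\delta_T,\delta_X)$ is the span of monomials of that bidegree. Monomial order: $T_1^{c'_1}T_2^{c'_2}X_1^{d'_1}X_2^{d'_2}<T_1^{c_1}T_2^{c_2}X_1^{d_1}X_2^{d_2}$ iff $d'_1+d'_2<d_1+d_2$, or ($d'_1+d'_2=d_1+d_2$ and $d'_2<d_2$), or ($d'_1=d_1$, $d'_2=d_2$, $c'_2<c_2$), or ($d'_1=d_1$, $d'_2=d_2$, $c'_2=c_2$, $c'_1<c_1$). $\mathcal{P}=\{(a,b)\in\mathbb{N}^2:a\le\delta_X,\eta a+b\le\delta\}$; $M(d_2,c_2)=T_1^{\delta-\eta d_2-c_2}T_2^{c_2}X_1^{\delta_X-d_2}X_2^{d_2}$ for $(d_2,c_2)\in\mathcal{P}$ (these are exactly the monomials of bidegree $(\delta_T,\delta_X)$). $A=\delta_X$ if $\delta_T\ge0$, $A=\delta/\eta$ if $\delta_T<0$. Condition (H): $\eta\ge2$, $\delta_T<0$, $\eta\mid\delta_T$, $q\le\delta_X+\delta_T/\eta$.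 $p:\mathcal{P}\to\mathcal{P}$, $(d_2,c_2)\mapsto(d'_2,c'_2)$: $d'_2=d_2$ if $d_2\in\{0,A\}$, otherwise $d'_2\in\{1,\dots,q-1\}$ with $d'_2\equiv d_2\pmod{q-1}$; $c'_2=0$ if $c_2=0$; $c'_2=\delta-\eta d'_2$ if $c_2=\delta-\eta d_2$; otherwise $c'_2\in\{1,\dots,q-1\}$ with $c'_2\equiv c_2\pmod{q-1}$. The linear map $\pi_{(\delta_T,\delta_X)}$ on $R(\delta_T,\delta_X)$ is $\pi(M(d_2,c_2))=M(p(d_2,c_2))$, except when (H) holds and $(d_2,c_2)=(\delta/\eta,0)$: then with $\delta/\eta=k(q-1)+r$, $k\in\mathbb{N}$, $r\in\{1,\dots,q-1\}$, $\pi(M(\delta/\eta,0))=M(r,0)+M(r,\eta k(q-1))-M(r,q-1)$. *)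

From HB Require Import structures.
From mathcomp Require Import all_boot all_order all_algebra all_field.
Set Implicit Arguments. Unset Strict Implicit. Unset Printing Implicit Defensive.
Import Order.TTheory GRing.Theory Num.Theory.

(* Exponent vector of T1^c1 T2^c2 X1^d1 X2^d2, encoded as (((c1, c2), d1), d2). *)
Definition expo := (nat * nat * nat * nat)%type.
Definition e_c1 (e : expo) : nat := e.1.1.1.
Definition e_c2 (e : expo) : nat := e.1.1.2.
Definition e_d1 (e : expo) : nat := e.1.2.
Definition e_d2 (e : expo) : nat := e.2.

Definition mono_lt (e' e : expo) : bool :=
  [|| e_d1 e' + e_d2 e' < e_d1 e + e_d2 e,
      (e_d1 e' + e_d2 e' == e_d1 e + e_d2 e) && (e_d2 e' < e_d2 e),
      [&& e_d1 e' == e_d1 e, e_d2 e' == e_d2 e & e_c2 e' < e_c2 e]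
    | [&& e_d1 e' == e_d1 e, e_d2 e' == e_d2 e, e_c2 e' == e_c2 e
        & e_c1 e' < e_c1 e]].
Definition mono_le (e' e : expo) : bool := (e' == e) || mono_lt e' e.

(* delta = delta_T + eta * delta_X  (assumed >= 0, so taken as a nat). *)
Definition delta (eta dX : nat) (dT : int) : nat := absz (dT + (eta * dX)%:Z)%R.

Definition inP (eta dX : nat) (dT : int) (a b : nat) : bool :=
  (a <= dX) && (eta * a + b <= delta eta dX dT).

Definition Mmon (eta dX : nat) (dT : int) (d2 c2 : nat) : expo :=
  (delta eta dX dT - eta * d2 - c2, c2, dX - d2, d2).

(* "d2 = A": A = delta_X if delta_T >= 0, A = delta/eta (rational) otherwise *)
Definition isA (eta dX : nat) (dT : int) (d2 : nat) : bool :=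
  if (0 <= dT)%R then d2 == dX else eta * d2 == delta eta dX dT.

(* the unique representative in {1,...,q-1} of n (n >= 1) modulo q-1 *)
Definition red (q n : nat) : nat := ((n.-1) %% q.-1).+1.

Definition pmap (q eta dX : nat) (dT : int) (d2 c2 : nat) : nat * nat :=
  let dl := delta eta dX dT in
  let d2' := if (d2 == 0) || isA eta dX dT d2 then d2 else red q d2 in
  let c2' := if c2 == 0 then 0
             else if c2 == dl - eta * d2 then dl - eta * d2'
             else red q c2 in
  (d2', c2').

Definition condH (q eta dX : nat) (dT : int) : bool :=
  [&& 2 <= eta, (dT < 0)%R, (eta%:Z %| dT)%Z
    & (q%:Z <= dX%:Z + (dT %/ eta%:Z)%Z)%R].

(* An element of R, written as a formal F-linear combination of monomials. *)
Definition rpoly (F : fieldType) := seq (F * expo).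
Definition coefp (F : fieldType) (p : rpoly F) (e : expo) : F :=
  (\sum_(t <- p | t.2 == e) t.1)%R.

Definition pi_map (F : fieldType) (q eta dX : nat) (dT : int) (d2 c2 : nat)
  : rpoly F :=
  let dl := delta eta dX dT in
  if [&& condH q eta dX dT, eta * d2 == dl & c2 == 0] then
    let n := dl %/ eta in
    let r := red q n in
    let k := (n.-1) %/ q.-1 in
    [:: (1%R, Mmon eta dX dT r 0);
        (1%R, Mmon eta dX dT r (eta * k * q.-1));
        ((-1)%R, Mmon eta dX dT r q.-1)]
  else
    let pc := pmap q eta dX dT d2 c2 in
    [:: (1%R, Mmon eta dX dT pc.1 pc.2)].

Definition is_leading (F : fieldType) (p : rpoly F) (m : expo) : Prop :=
  coefp p m != 0%R /\ forall m', coefp p m' != 0%R -> mono_le m' m.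

From Pilot Require Import Defs.
From HB Require Import structures.
From mathcomp Require Import all_boot all_order all_algebra all_field.
From mathcomp Require Import zify ring.

Set Implicit Arguments.
Unset Strict Implicit.
Unset Printing Implicit Defensive.
Import Order.TTheory GRing.Theory Num.Theory.

(* The map p only replaces exponents by their representatives in
   {1, ..., q-1}, which are never larger, so pi(M) = M(p(d2, c2)) is below M:
   either the X2-degree drops, or it is kept and then c2 is kept or reduced.
   In the exceptional case (H), d2 = delta/eta = delta_X + delta_T/eta >= q,
   so its representative r is strictly smaller, and all three monomials of
   pi(M) have X2-degree r < d2. *)

Lemma coefp_neq0_mem (F : fieldType) (p : rpoly F) (m : expo) :
  Defs.coefp p m != 0%R -> exists2 t, t \in p & t.2 = m.
Proof.
elim: p => [|t p IHp]; first by rewrite /Defs.coefp big_nil eqxx.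
rewrite /Defs.coefp big_cons; case: (t.2 =P m) => [<-|_] nz_m.
  by exists t; rewrite ?mem_head.
by have [u pu <-] := IHp nz_m; exists u; rewrite // in_cons pu orbT.
Qed.

Lemma red_le q n : 0 < n -> red q n <= n.
Proof. by move=> n_gt0; rewrite /red; have := leq_mod n.-1 q.-1; lia. Qed.

Lemma red_lt q n : 1 < q -> q <= n -> red q n < n.
Proof.
move=> q_gt1 le_qn; rewrite /red.
have /(ltn_pmod n.-1) : 0 < q.-1 by lia.
lia.
Qed.

Section MonomialsOfBidegree.

Variables (eta dX : nat) (dT : int).

Local Notation M := (Mmon eta dX dT).

(* The bound on d2 matters: the X1-exponent dX - d2 is a truncated difference. *)
Lemma mono_lt_Mmon_d2 d2' c2' d2 c2 :
  d2' < d2 -> d2 <= dX -> mono_lt (M d2' c2') (M d2 c2).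
Proof.
move=> lt_d2 le_d2X; apply/orP; right; apply/orP; left.
rewrite /Mmon /e_d1 /e_d2 /= lt_d2 andbT; apply/eqP; lia.
Qed.

Lemma mono_le_Mmon_c2 d2 c2' c2 : c2' <= c2 -> mono_le (M d2 c2') (M d2 c2).
Proof.
rewrite leq_eqVlt => /orP [/eqP -> | lt_c2]; first by rewrite /mono_le eqxx.
apply/orP; right; do 2 (apply/orP; right); apply/orP; left.
by rewrite /Mmon /e_d1 /e_d2 /e_c2 /= !eqxx lt_c2.
Qed.

Lemma mono_le_Mmon_pmap (q d2 c2 : nat) :
  d2 <= dX ->
  let pc := Defs.pmap q eta dX dT d2 c2 in mono_le (M pc.1 pc.2) (M d2 c2).
Proof.
move=> le_d2X; rewrite /Defs.pmap /=.
set d2' := if _ then _ else _.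
have le_d2' : d2' <= d2.
  by rewrite /d2'; case: ifP => // /norP [d2_neq0 _]; apply: red_le; lia.
have [lt_d2' | ge_d2'] := ltnP d2' d2.
  by apply/orP; right; apply: mono_lt_Mmon_d2.
have -> : d2' = d2 by lia.
apply: mono_le_Mmon_c2.
case: ifP => [// | /negbT c2_neq0]; case: ifP => [/eqP -> // | _].
by apply: red_le; rewrite lt0n.
Qed.

Lemma condH_q_le_d2 q d2 :
  (0 <= dT + (eta * dX)%:Z)%R -> condH q eta dX dT ->
  eta * d2 = delta eta dX dT -> q <= d2.
Proof.
move=> delta_ge0 /and4P [eta_ge2 _ eta_dvd le_q] eta_d2.
have eta_neq0 : (eta%:Z != 0)%R by rewrite eqz_nat; lia.
have d2E : (d2%:Z = (dT %/ eta%:Z)%Z + dX%:Z)%R.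
  apply: (mulfI eta_neq0).
  rewrite -PoszM eta_d2 /delta gez0_abs // -{1}(divzK eta_dvd) mulrDr PoszM.
  ring.
by rewrite -lez_nat d2E addrC.
Qed.

Lemma pi_map_le (F : fieldType) q d2 c2 :
  1 < q -> (0 <= dT + (eta * dX)%:Z)%R -> inP eta dX dT d2 c2 ->
  forall t, t \in pi_map F q eta dX dT d2 c2 -> mono_le t.2 (M d2 c2).
Proof.
move=> q_gt1 delta_ge0 /andP [le_d2X _] t; rewrite /pi_map.
case: ifP => [/and3P [H_holds /eqP eta_d2 /eqP ->] | _]; last first.
  by rewrite mem_seq1 => /eqP -> /=; apply: mono_le_Mmon_pmap.
have le_qd2 : q <= d2 by apply: condH_q_le_d2.
have -> : delta eta dX dT %/ eta = d2.
  by move: H_holds => /and4P [eta_ge2 _ _ _]; rewrite -eta_d2 mulKn //; lia.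
have lt_r : red q d2 < d2 by apply: red_lt.
by rewrite !inE => /or3P [] /eqP -> /=; apply/orP; right;
  apply: mono_lt_Mmon_d2.
Qed.

End MonomialsOfBidegree.

Theorem lemma3p5 (F : finFieldType) (q eta dX : nat) (dT : int) :
  #|F| = q ->
  (0 <= dT + (eta * dX)%:Z)%R ->
  forall d2 c2 : nat, inP eta dX dT d2 c2 ->
  forall m : expo, is_leading (pi_map F q eta dX dT d2 c2) m ->
  mono_le m (Mmon eta dX dT d2 c2).
Proof.
move=> card_F delta_ge0 d2 c2 in_P m [nz_m _].
have q_gt1 : 1 < q by rewrite -card_F; exact: card_finNzRing_gt1.
have [t t_in <-] := coefp_neq0_mem nz_m.
exact: pi_map_le t_in.
Qed.
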